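(* Let $p\in\Gamma\backslash G$ be Diophantine of type $(\kappa_1,\dots,\kappa_k)$, fix $j\in\{1,\dots,k\}$ and let $0<\gamma<\frac1{\kappa_j+4}$. Then there is $C>0$ depending only on $p$ and $\gamma$ such that for all sufficiently small $\epsilon>0$ and all $T\ge1$, $$\frac1T\,m\Big(\Big\{x\in[1,T]:\ p\begin{pmatrix}x^{1/4}&x^{3/4+\gamma}\\0&x^{-1/4}\end{pmatrix}\in S_{j,\ \epsilon x^{-\frac14+\frac1{\kappa_j+4}}}\Big\}\Big)\le C\epsilon,$$ where $m$ is Lebesgue measure.
   Context: $G=\mathrm{PSL}(2,\mathbb R)$ acts on $\mathfrak H$ by Möbius transformations and linearly on $\mathbb R^2/\pm$. $\Gamma<G$ is a non-uniform lattice; $u(t)=\begin{pmatrix}1&t\\0&1\end{pmatrix}$, $N=\{u(t)\}$, $e_1=(1,0)^T$. Let $\eta_1,\dots,\eta_k$ be representatives of the inequivalent cusps of $\Gamma\backslash\mathfrak H$, fix $\sigma_j\in G$ with $\lim_{t\to\infty}\sigma_j\cdot(it)=\eta_j$ and $\sigma_j^{-1}\Gamma\sigma_j\cap N$ a lattice in $N$. $\Gamma_j=\Gamma\cap\sigma_jN\sigma_j^{-1}$, $\pi_j:\Gamma_j\backslash G\to\Gamma\backslash G$ the projection, $m_j(\Gamma_jg)=g^{-1}\sigma_je_1\in\mathbb R^2/\pm$. $p$ is Diophantine of type $(\kappa_1,\dots,\kappa_k)$ ($\kappa_j>0$) if for each $j$ there exist $\mu_j,\nu_j>0$ such that every $(a,b)^T\in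 m_j(\pi_j^{-1}(p))$ satisfies $|b|\ge\mu_j$ or $|a|^{\kappa_j}|b|\ge\nu_j$. For $q\in\Gamma\backslash G$, $\|q\|_j=\min\{\|v\|:v\in m_j(\pi_j^{-1}(q))\}$ and $S_{j,\delta}=\{q\in\Gamma\backslash G:\|q\|_j\le\delta\}$. *)

From Stdlib Require Import Reals Lra.
Open Scope R_scope.

(* 2x2 real matrices; elements of G = PSL(2,R) are represented by
   matrices of determinant 1, all notions below being invariant under g |-> -g. *)
Record mat2 := M2 { ma : R; mb : R; mc : R; md : R }.

Definition mid : mat2 := M2 1 0 0 1.
Definition mneg (g : mat2) : mat2 := M2 (- ma g) (- mb g) (- mc g) (- md g).
Definition mmul (g h : mat2) : mat2 :=
  M2 (ma g * ma h + mb g * mc h) (ma g * mb h + mb g * md h)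
     (mc g * ma h + md g * mc h) (mc g * mb h + md g * md h).
Definition mdet (g : mat2) : R := ma g * md g - mb g * mc g.
(* inverse of a determinant-one matrix *)
Definition minv (g : mat2) : mat2 := M2 (md g) (- mb g) (- mc g) (ma g).
Definition mtrace (g : mat2) : R := ma g + md g.
Definition mnorm (g : mat2) : R :=
  Rabs (ma g) + Rabs (mb g) + Rabs (mc g) + Rabs (md g).
Definition mdist (g h : mat2) : R :=
  Rabs (ma g - ma h) + Rabs (mb g - mb h) + Rabs (mc g - mc h) + Rabs (md g - md h).

Definition mapply (g : mat2) (v : R * R) : R * R :=
  (ma g * fst v + mb g * snd v, mc g * fst v + md g * snd v).
Definition vnorm (v : R * R) : R := sqrt (fst v ^ 2 + snd v ^ 2).

Definition in_G (g : mat2) : Prop := mdet g = 1.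

(* Moebius action on the upper half plane, z = x + i y *)
Definition mobius (g : mat2) (z : R * R) : R * R :=
  let x := fst z in let y := snd z in
  let wr := mc g * x + md g in let wi := mc g * y in
  let n := wr ^ 2 + wi ^ 2 in
  (((ma g * x + mb g) * wr + ma g * y * wi) / n, (mdet g * y) / n).

(* action on the boundary R u {oo}; None = oo *)
Definition bact (g : mat2) (e : option R) : option R :=
  match e with
  | Some x => if Req_EM_T (mc g * x + md g) 0 then None
              else Some ((ma g * x + mb g) / (mc g * x + md g))
  | None => if Req_EM_T (mc g) 0 then None else Some (ma g / mc g)
  end.

(* Gamma < PSL(2,R), given by its preimage in SL(2,R) *)
Definition subgroup_G (Gam : mat2 -> Prop) : Prop :=
  (forall g, Gam g -> in_G g) /\ Gam mid /\ Gam (mneg mid) /\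
  (forall g h, Gam g -> Gam h -> Gam (mmul g h)) /\
  (forall g, Gam g -> Gam (minv g)).

Definition discrete_G (Gam : mat2 -> Prop) : Prop :=
  exists d, 0 < d /\ forall g, Gam g -> mdist g mid < d -> g = mid \/ g = mneg mid.

(* hyperbolic area (outer measure dx dy / y^2) of F is finite: F is covered by
   countably many rectangles [a,b]x[c,d], 0<c<=d, with bounded total area *)
Definition hyp_area_finite (F : R -> R -> Prop) : Prop :=
  exists M, exists a b c d : nat -> R,
    (forall n, a n <= b n /\ 0 < c n /\ c n <= d n) /\
    (forall x y, F x y -> exists n, a n <= x <= b n /\ c n <= y <= d n) /\
    (forall N, sum_f_R0 (fun n => (b n - a n) * (/ c n - / d n)) N <= M).

(* finite covolume: some subset of H meeting every Gamma-orbit has finite area *)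
Definition finite_covolume (Gam : mat2 -> Prop) : Prop :=
  exists F : R -> R -> Prop, hyp_area_finite F /\
    forall x y, 0 < y -> exists g, Gam g /\ F (fst (mobius g (x, y))) (snd (mobius g (x, y))).

(* cocompact: a bounded set of G surjects onto Gamma\G *)
Definition uniform (Gam : mat2 -> Prop) : Prop :=
  exists M, forall g, in_G g -> exists h, Gam h /\ mnorm (mmul h g) <= M.

Definition nonuniform_lattice (Gam : mat2 -> Prop) : Prop :=
  subgroup_G Gam /\ discrete_G Gam /\ finite_covolume Gam /\ ~ uniform Gam.

Definition parabolic (g : mat2) : Prop :=
  g <> mid /\ g <> mneg mid /\ Rabs (mtrace g) = 2.

Definition is_cusp (Gam : mat2 -> Prop) (e : option R) : Prop :=
  exists g, Gam g /\ parabolic g /\ bact g e = e.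

Definition cusp_equiv (Gam : mat2 -> Prop) (e e' : option R) : Prop :=
  exists g, Gam g /\ bact g e = e'.

Definition cusp_reps (Gam : mat2 -> Prop) (k : nat) (eta : nat -> option R) : Prop :=
  (forall j, (j < k)%nat -> is_cusp Gam (eta j)) /\
  (forall i j, (i < k)%nat -> (j < k)%nat -> cusp_equiv Gam (eta i) (eta j) -> i = j) /\
  (forall e, is_cusp Gam e -> exists j, (j < k)%nat /\ cusp_equiv Gam e (eta j)).

(* lim_{t -> oo} s . (i t) = e  (in the Riemann sphere) *)
Definition tends_to_cusp (s : mat2) (e : option R) : Prop :=
  match e with
  | Some x0 => forall eps, 0 < eps -> exists T0, forall t, T0 < t ->
       Rabs (fst (mobius s (0, t)) - x0) + Rabs (snd (mobius s (0, t))) < eps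
  | None => forall M, exists T0, forall t, T0 < t ->
       M < fst (mobius s (0, t)) ^ 2 + snd (mobius s (0, t)) ^ 2
  end.

Definition u (t : R) : mat2 := M2 1 t 0 1.

Definition lattice_in_N (L : R -> Prop) : Prop :=
  (exists d, 0 < d /\ forall t, L t -> 0 < Rabs t < d -> False) /\
  (exists M, forall t, exists s, L s /\ Rabs (t - s) <= M).

Definition cusp_data (Gam : mat2 -> Prop) (k : nat) (eta : nat -> option R)
  (sigma : nat -> mat2) : Prop :=
  cusp_reps Gam k eta /\
  forall j, (j < k)%nat ->
    in_G (sigma j) /\ tends_to_cusp (sigma j) (eta j) /\
    (* sigma_j^{-1} Gamma sigma_j  /\  N  is a lattice in N *)
    lattice_in_N (fun t => Gam (mmul (sigma j) (mmul (u t) (minv (sigma j))))).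

(* v in m_j(pi_j^{-1}(Gamma g)) : v = (h g)^{-1} sigma_j e_1, h in Gamma (up to sign) *)
Definition mj_vec (Gam : mat2 -> Prop) (sj g : mat2) (v : R * R) : Prop :=
  exists h, Gam h /\ v = mapply (minv (mmul h g)) (ma sj, mc sj).

(* |a|^kappa, with 0^kappa = 0 *)
Definition rpow (x k : R) : R := if Req_EM_T x 0 then 0 else Rpower x k.

Definition diophantine (Gam : mat2 -> Prop) (k : nat) (sigma : nat -> mat2)
  (kappa : nat -> R) (g : mat2) : Prop :=
  (forall j, (j < k)%nat -> 0 < kappa j) /\
  forall j, (j < k)%nat -> exists mu nu, 0 < mu /\ 0 < nu /\
    forall a b, mj_vec Gam (sigma j) g (a, b) ->
      mu <= Rabs b \/ nu <= rpow (Rabs a) (kappa j) * Rabs b.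

(* Gamma g in S_{j,delta}, i.e. ||Gamma g||_j <= delta *)
Definition in_S (Gam : mat2 -> Prop) (sj g : mat2) (delta : R) : Prop :=
  exists v, mj_vec Gam sj g v /\ vnorm v <= delta.

Definition leb_outer_le (E : R -> Prop) (r : R) : Prop :=
  forall eta, 0 < eta -> exists a b : nat -> R,
    (forall n, a n <= b n) /\
    (forall x, E x -> exists n, a n <= x <= b n) /\
    (forall N, sum_f_R0 (fun n => b n - a n) N <= r + eta).

Definition Mx (x gam : R) : mat2 :=
  M2 (Rpower x (1/4)) (Rpower x (3/4 + gam)) 0 (Rpower x (- (1/4))).

(* Write [s = sigma_j], [al = 1/(kappa_j+4)] and let [w = (a, b)] range over
   [m_j(pi_j^-1(p))]. The point [p Mx x] lies in [S_(j, eps x^(al-1/4))] exactly when some [w]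
   has [|b| <= eps x^(al-1/2)] and [|a - x^(1+gam) b| <= eps x^al]; the Diophantine condition
   then forces [|b| >= x^(al-gam-1)/C]. A fixed [w] can only do this for [x] in a window of
   length [O(eps R)], [R = x^(al-gam)/|b|], and two vectors whose windows of size [R/(4C)]
   overlap satisfy [|det(w, w')| <= 8 eps]. By Shimizu's lemma for [s^-1 Gamma s], which
   contains a translation [u(t0)], [|det(w, w')| t0 >= 1] unless [w' = +-w]. So for small [eps]
   the windows of different vectors are disjoint subintervals of [[0, 2T]], and the enlarged
   windows covering the bad set have total length [O(eps T)]. *)

From Stdlib Require Import Reals Lra Lia Nsatz Psatz Classical ClassicalEpsilon Cantor ZArith.
Open Scope R_scope.

(** * Matrices and conjugate subgroups *)

Definition msub (g h : mat2) : mat2 :=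
  M2 (ma g - ma h) (mb g - mb h) (mc g - mc h) (md g - md h).

Ltac mat2_eq :=
  repeat match goal with X : mat2 |- _ => destruct X end;
  unfold mmul, minv, mid, mneg, mdet, msub, u in *; simpl in *; f_equal.

Lemma mmul_assoc X Y Z : mmul X (mmul Y Z) = mmul (mmul X Y) Z.
Proof. mat2_eq; ring. Qed.

Lemma mmul_1_l X : mmul mid X = X.
Proof. mat2_eq; ring. Qed.

Lemma mmul_1_r X : mmul X mid = X.
Proof. mat2_eq; ring. Qed.

Lemma mmul_minv_l X : mdet X = 1 -> mmul (minv X) X = mid.
Proof. intro; mat2_eq; nra. Qed.

Lemma mmul_minv_r X : mdet X = 1 -> mmul X (minv X) = mid.
Proof. intro; mat2_eq; nra. Qed.

Lemma minv_mmul X Y : minv (mmul X Y) = mmul (minv Y) (minv X).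
Proof. mat2_eq; ring. Qed.

Lemma mdet_mmul X Y : mdet (mmul X Y) = mdet X * mdet Y.
Proof. destruct X, Y; unfold mdet, mmul; simpl; ring. Qed.

Lemma mdet_minv X : mdet (minv X) = mdet X.
Proof. destruct X; unfold mdet, minv; simpl; ring. Qed.

Lemma mapply_mmul X Y v : mapply (mmul X Y) v = mapply X (mapply Y v).
Proof. destruct X, Y, v; unfold mapply, mmul; simpl; f_equal; ring. Qed.

Lemma mnorm_ge0 X : 0 <= mnorm X.
Proof.
  destruct X as [a b c d]; unfold mnorm; simpl.
  pose proof (Rabs_pos a); pose proof (Rabs_pos b);
  pose proof (Rabs_pos c); pose proof (Rabs_pos d); lra.
Qed.

Lemma Rabs_dot_le x1 y1 x2 y2 :
  Rabs (x1 * y1 + x2 * y2) <= Rabs x1 * Rabs y1 + Rabs x2 * Rabs y2.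
Proof. rewrite <- !Rabs_mult. apply Rabs_triang. Qed.

Lemma mnorm_mmul X Y : mnorm (mmul X Y) <= mnorm X * mnorm Y.
Proof.
  destruct X as [a b c d], Y as [e f g h]; unfold mnorm, mmul; simpl.
  pose proof (Rabs_dot_le a e b g); pose proof (Rabs_dot_le a f b h).
  pose proof (Rabs_dot_le c e d g); pose proof (Rabs_dot_le c f d h).
  pose proof (Rabs_pos a); pose proof (Rabs_pos b);
  pose proof (Rabs_pos c); pose proof (Rabs_pos d).
  pose proof (Rabs_pos e); pose proof (Rabs_pos f);
  pose proof (Rabs_pos g); pose proof (Rabs_pos h).
  nra.
Qed.

Definition mconj (s X : mat2) : mat2 := mmul s (mmul X (minv s)).

Lemma mconj_mmul s X Y : mdet s = 1 -> mconj s (mmul X Y) = mmul (mconj s X) (mconj s Y).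
Proof. intro Hs. unfold mconj. mat2_eq; nsatz. Qed.

Lemma mconj_minv s X : mconj s (minv X) = minv (mconj s X).
Proof. unfold mconj. mat2_eq; ring. Qed.

Lemma mconj_minv_mconj s X : mdet s = 1 -> mconj (minv s) (mconj s X) = X.
Proof. intro Hs. unfold mconj. mat2_eq; nsatz. Qed.

Lemma mdet_mconj s X : mdet s = 1 -> mdet (mconj s X) = mdet X.
Proof. intro Hs. unfold mconj. rewrite !mdet_mmul, mdet_minv, Hs. ring. Qed.

Lemma msub_mconj_mid s X : mdet s = 1 ->
  msub (mconj s X) mid = mmul s (mmul (msub X mid) (minv s)).
Proof. intro Hs. unfold mconj. mat2_eq; nsatz. Qed.

Lemma msub_mmul_minv_mid X Y : mdet Y = 1 -> msub (mmul X (minv Y)) mid = mmul (msub X Y) (minv Y).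
Proof. intro HY. mat2_eq; nsatz. Qed.

Lemma mconj_mid s : mdet s = 1 -> mconj s mid = mid.
Proof. intro Hs. unfold mconj. rewrite mmul_1_l. exact (mmul_minv_r s Hs). Qed.

Lemma mconj_mneg_mid s : mdet s = 1 -> mconj s (mneg mid) = mneg mid.
Proof. intro Hs. unfold mconj. mat2_eq; nsatz. Qed.

(* [in_conj Gam s] is the subgroup [s^-1 Gam s]. *)
Definition in_conj (Gam : mat2 -> Prop) (s X : mat2) : Prop := Gam (mconj s X).

Section ConjugateSubgroup.
Variable Gam : mat2 -> Prop.
Hypothesis HG : subgroup_G Gam.
Variable s : mat2.
Hypothesis Hs : mdet s = 1.

Lemma in_conj_mmul X Y : in_conj Gam s X -> in_conj Gam s Y -> in_conj Gam s (mmul X Y).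
Proof. unfold in_conj. rewrite mconj_mmul by exact Hs. destruct HG as (_ & _ & _ & Hm & _). auto. Qed.

Lemma in_conj_minv X : in_conj Gam s X -> in_conj Gam s (minv X).
Proof. unfold in_conj. rewrite mconj_minv. destruct HG as (_ & _ & _ & _ & Hi). auto. Qed.

Lemma in_conj_mdet X : in_conj Gam s X -> mdet X = 1.
Proof.
  unfold in_conj. intro HX. destruct HG as (Hdet & _).
  rewrite <- (mdet_mconj s X Hs). exact (Hdet _ HX).
Qed.

Lemma in_conj_conj_mmul X Y : in_conj Gam s X -> in_conj Gam s Y ->
  in_conj Gam s (mmul (mmul X Y) (minv X)).
Proof. intros HX HY. apply in_conj_mmul; [apply in_conj_mmul |]; auto using in_conj_minv. Qed.

Lemma in_conj_discrete : discrete_G Gam -> exists d, 0 < d /\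
  forall X, in_conj Gam s X -> mnorm (msub X mid) < d -> X = mid \/ X = mneg mid.
Proof.
  intros [d0 [Hd0 HD]].
  set (K := mnorm s * mnorm (minv s)).
  assert (HK : 0 <= K) by (apply Rmult_le_pos; apply mnorm_ge0).
  exists (d0 / (K + 1)). split; [apply Rdiv_lt_0_compat; lra |].
  intros X HX Hsmall.
  assert (Hnear : mdist (mconj s X) mid < d0).
  { change (mnorm (msub (mconj s X) mid) < d0). rewrite msub_mconj_mid by exact Hs.
    eapply Rle_lt_trans; [apply mnorm_mmul |].
    eapply Rle_lt_trans; [apply Rmult_le_compat_l; [apply mnorm_ge0 | apply mnorm_mmul] |].
    replace (mnorm s * (mnorm (msub X mid) * mnorm (minv s))) with (K * mnorm (msub X mid))
      by (unfold K; ring).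
    pose proof (mnorm_ge0 (msub X mid)).
    apply Rle_lt_trans with ((K + 1) * mnorm (msub X mid)); [nra |].
    apply Rmult_lt_reg_r with (/ (K + 1)); [apply Rinv_0_lt_compat; lra |].
    replace ((K + 1) * mnorm (msub X mid) * / (K + 1)) with (mnorm (msub X mid)) by (field; lra).
    exact Hsmall. }
  rewrite <- (mconj_minv_mconj s X Hs).
  destruct (HD _ HX Hnear) as [-> | ->]; [left | right].
  - apply mconj_mid. rewrite mdet_minv. exact Hs.
  - apply mconj_mneg_mid. rewrite mdet_minv. exact Hs.
Qed.

End ConjugateSubgroup.

(** * Shimizu's lemma *)

Lemma pow_le_1 q n : 0 <= q <= 1 -> q ^ n <= 1.
Proof. intro Hq. rewrite <- (pow1 n). apply pow_incr. lra. Qed.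

Lemma pow_S_le q n : 0 <= q <= 1 -> q ^ S n <= q ^ n.
Proof. intro Hq. simpl. pose proof (pow_le q n (proj1 Hq)). nra. Qed.

Section ConjugationOrbit.
Variables (Y : mat2) (t : R).
Hypothesis HY : mdet Y = 1.
Hypothesis Ht : t <> 0.

(* Shimizu's iteration [A_(n+1) = A_n u(t) A_n^-1]: it squares [c t] and converges to [u(t)]. *)
Fixpoint conj_orbit (n : nat) : mat2 :=
  match n with
  | O => Y
  | S n => mmul (mmul (conj_orbit n) (u t)) (minv (conj_orbit n))
  end.

Lemma mdet_conj_orbit n : mdet (conj_orbit n) = 1.
Proof.
  induction n as [| n IH]; [exact HY |]. simpl.
  rewrite !mdet_mmul, mdet_minv, IH. unfold mdet, u; simpl. ring.
Qed.

Lemma conj_orbit_S n : let A := conj_orbit n in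
  ma (conj_orbit (S n)) = 1 - ma A * (mc A * t) /\
  mb (conj_orbit (S n)) = ma A ^ 2 * t /\
  mc (conj_orbit (S n)) * t = - (mc A * t) ^ 2 /\
  md (conj_orbit (S n)) = 1 + ma A * (mc A * t).
Proof.
  intro A. unfold A. pose proof (mdet_conj_orbit n) as Hdet. simpl.
  destruct (conj_orbit n) as [a b c d]; unfold mdet in Hdet; simpl in *.
  repeat split; nsatz.
Qed.

Lemma conj_orbit_mc_neq0 n : mc Y <> 0 -> mc (conj_orbit n) <> 0.
Proof.
  intro Hc. induction n as [| n IH]; [exact Hc |]. intro E.
  destruct (conj_orbit_S n) as (_ & _ & Ec & _). rewrite E in Ec.
  assert (mc (conj_orbit n) * t = 0) by nra.
  apply Rmult_integral in H. tauto.
Qed.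

Let q := Rabs (mc Y * t).
Hypothesis Hq : q < 1.

Lemma conj_orbit_mc_le n : Rabs (mc (conj_orbit n) * t) <= q ^ S n.
Proof.
  assert (Hq0 : 0 <= q <= 1) by (split; [apply Rabs_pos | lra]).
  induction n as [| n IH]; [simpl; rewrite Rmult_1_r; apply Rle_refl |].
  destruct (conj_orbit_S n) as (_ & _ & -> & _).
  rewrite Rabs_Ropp, <- RPow_abs.
  set (c := Rabs (mc (conj_orbit n) * t)) in *.
  assert (Hc0 : 0 <= c) by apply Rabs_pos.
  assert (HqS : q ^ S n <= q).
  { change (q * q ^ n <= q). pose proof (pow_le_1 q n Hq0). nra. }
  replace (q ^ S (S n)) with (q * q ^ S n) by reflexivity.
  change (c * (c * 1) <= q * q ^ S n). rewrite Rmult_1_r.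
  apply Rle_trans with (q ^ S n * q ^ S n); [apply Rmult_le_compat; lra |].
  apply Rmult_le_compat_r; lra.
Qed.

Let M := Rmax (Rabs (ma Y)) (/ (1 - q)).

Lemma conj_orbit_ma_le n : Rabs (ma (conj_orbit n)) <= M.
Proof.
  assert (Hq0 : 0 <= q <= 1) by (split; [apply Rabs_pos | lra]).
  assert (HM : 1 <= M * (1 - q)).
  { assert (/ (1 - q) <= M) by apply Rmax_r.
    assert (/ (1 - q) * (1 - q) = 1) by (field; lra). nra. }
  induction n as [| n IH]; [apply Rmax_l |].
  destruct (conj_orbit_S n) as (-> & _).
  eapply Rle_trans; [apply Rabs_triang |]. rewrite Rabs_Ropp, Rabs_mult, Rabs_R1.
  assert (Hc : Rabs (mc (conj_orbit n) * t) <= q).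
  { eapply Rle_trans; [apply conj_orbit_mc_le |]. change (q * q ^ n <= q).
    pose proof (pow_le_1 q n Hq0). nra. }
  assert (Rabs (ma (conj_orbit n)) * Rabs (mc (conj_orbit n) * t) <= M * q)
    by (apply Rmult_le_compat; auto using Rabs_pos).
  lra.
Qed.

Lemma conj_orbit_ma_sub1 n : Rabs (ma (conj_orbit (S n)) - 1) <= M * q ^ S n.
Proof.
  destruct (conj_orbit_S n) as (-> & _).
  replace (1 - ma (conj_orbit n) * (mc (conj_orbit n) * t) - 1)
    with (- (ma (conj_orbit n) * (mc (conj_orbit n) * t))) by ring.
  rewrite Rabs_Ropp, Rabs_mult.
  apply Rmult_le_compat; auto using Rabs_pos, conj_orbit_ma_le, conj_orbit_mc_le.
Qed.

Lemma conj_orbit_near_u : exists K, 0 <= K /\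
  forall n, mnorm (msub (conj_orbit (S (S n))) (u t)) <= K * q ^ n.
Proof.
  assert (Hq0 : 0 <= q <= 1) by (split; [apply Rabs_pos | lra]).
  assert (Hat : 0 < Rabs t) by (apply Rabs_pos_lt; exact Ht).
  assert (HM0 : 0 <= M) by (eapply Rle_trans; [apply Rabs_pos | apply (conj_orbit_ma_le 0)]).
  exists (2 * M + Rabs t * M * (M + 1) + / Rabs t). split.
  { pose proof (Rinv_0_lt_compat _ Hat). nra. }
  intro n. set (A := conj_orbit (S n)).
  destruct (conj_orbit_S (S n)) as (Ea & Eb & Ec & Ed). fold A in Ea, Eb, Ec, Ed.
  pose proof (pow_le q n (proj1 Hq0)) as Hqn.
  pose proof (pow_S_le q n Hq0). pose proof (pow_S_le q (S n) Hq0). pose proof (pow_S_le q (S (S n)) Hq0).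
  assert (Hac : Rabs (ma A * (mc A * t)) <= M * q ^ n).
  { rewrite Rabs_mult. pose proof (conj_orbit_mc_le (S n)). fold A in H2.
    pose proof (conj_orbit_ma_le (S n)). fold A in H3.
    apply Rle_trans with (M * q ^ S (S n)); [apply Rmult_le_compat; auto using Rabs_pos |]. nra. }
  assert (Hb : Rabs (ma A ^ 2 * t - t) <= Rabs t * M * (M + 1) * q ^ n).
  { replace (ma A ^ 2 * t - t) with (t * ((ma A - 1) * (ma A + 1))) by ring.
    rewrite !Rabs_mult.
    pose proof (conj_orbit_ma_sub1 n). fold A in H2.
    assert (Rabs (ma A + 1) <= M + 1).
    { eapply Rle_trans; [apply Rabs_triang |]. rewrite Rabs_R1.
      pose proof (conj_orbit_ma_le (S n)). fold A in H3. lra. }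
    pose proof (Rabs_pos (ma A - 1)). pose proof (Rabs_pos (ma A + 1)).
    assert (Rabs (ma A - 1) * Rabs (ma A + 1) <= M * q ^ n * (M + 1))
      by (apply Rmult_le_compat; auto; nra).
    pose proof (Rabs_pos t). nra. }
  assert (Hc : Rabs (mc (conj_orbit (S (S n)))) <= / Rabs t * q ^ n).
  { pose proof (conj_orbit_mc_le (S (S n))) as Hct. rewrite Rabs_mult in Hct.
    replace (Rabs (mc (conj_orbit (S (S n)))))
      with (Rabs (mc (conj_orbit (S (S n)))) * Rabs t * / Rabs t) by (field; lra).
    pose proof (Rinv_0_lt_compat _ Hat). pose proof (pow_S_le q (S (S (S n))) Hq0). nra. }
  unfold mnorm, msub, u; cbn [ma mb mc md].
  rewrite Ea, Eb, Ed, Rminus_0_r.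
  replace (1 - ma A * (mc A * t) - 1) with (- (ma A * (mc A * t))) by ring.
  replace (1 + ma A * (mc A * t) - 1) with (ma A * (mc A * t)) by ring.
  rewrite Rabs_Ropp. lra.
Qed.

End ConjugationOrbit.

Lemma mc_mmul_minv_u X t : mc (mmul X (minv (u t))) = mc X.
Proof. destruct X; unfold mmul, minv, u; simpl; ring. Qed.

Lemma mdet_u t : mdet (u t) = 1.
Proof. unfold mdet, u; simpl; ring. Qed.

Theorem shimizu Gam s t Y : subgroup_G Gam -> discrete_G Gam -> mdet s = 1 ->
  in_conj Gam s (u t) -> t <> 0 -> in_conj Gam s Y -> mc Y <> 0 ->
  1 <= Rabs (mc Y * t).
Proof.
  intros HG HD Hs Hu Ht HY Hc.
  destruct (Rle_lt_dec 1 (Rabs (mc Y * t))) as [| Hq]; [assumption | exfalso].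
  pose proof (in_conj_mdet Gam HG s Hs Y HY) as HdY.
  assert (Horbit : forall n, in_conj Gam s (conj_orbit Y t n))
    by (induction n; simpl; auto using in_conj_conj_mmul).
  destruct (in_conj_discrete Gam s Hs HD) as [d [Hd Hdisc]].
  destruct (conj_orbit_near_u Y t HdY Ht Hq) as [K [HK Hnear]].
  set (q := Rabs (mc Y * t)) in *.
  set (KU := K * mnorm (minv (u t)) + 1).
  assert (HKU : 0 < KU) by (pose proof (mnorm_ge0 (minv (u t))); unfold KU; nra).
  destruct (pow_lt_1_zero q ltac:(rewrite Rabs_right by (apply Rle_ge, Rabs_pos); exact Hq)
              (d / KU) ltac:(apply Rdiv_lt_0_compat; assumption)) as [N HN].
  specialize (HN N (le_n _)). rewrite Rabs_right in HN by (apply Rle_ge, pow_le, Rabs_pos).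
  set (B := mmul (conj_orbit Y t (S (S N))) (minv (u t))).
  assert (HB : in_conj Gam s B) by (apply in_conj_mmul; auto using in_conj_minv).
  assert (HBnear : mnorm (msub B mid) < d).
  { unfold B. rewrite msub_mmul_minv_mid by apply mdet_u.
    eapply Rle_lt_trans; [apply mnorm_mmul |].
    pose proof (Hnear N). pose proof (mnorm_ge0 (minv (u t))).
    pose proof (mnorm_ge0 (msub (conj_orbit Y t (S (S N))) (u t))).
    pose proof (pow_le q N (Rabs_pos _)).
    apply Rle_lt_trans with (KU * q ^ N); [unfold KU; nra |].
    apply Rmult_lt_reg_r with (/ KU); [apply Rinv_0_lt_compat; lra |].
    replace (KU * q ^ N * / KU) with (q ^ N) by (field; lra). exact HN. }
  apply (conj_orbit_mc_neq0 Y t HdY Ht (S (S N)) Hc).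
  rewrite <- (mc_mmul_minv_u _ t). fold B.
  destruct (Hdisc B HB HBnear) as [-> | ->]; simpl; ring.
Qed.

Definition translations_discrete (Gam : mat2 -> Prop) (s : mat2) : Prop :=
  exists d, 0 < d /\ forall r, in_conj Gam s (u r) -> 0 < Rabs r < d -> False.

Lemma translations_not_contracted Gam s t0 rho : t0 <> 0 ->
  translations_discrete Gam s -> in_conj Gam s (u t0) -> 0 < rho < 1 ->
  ~ (forall r, in_conj Gam s (u r) -> in_conj Gam s (u (rho * r))).
Proof.
  intros Ht [d [Hd Hdisc]] H0 Hrho Hscale.
  assert (Hn : forall n, in_conj Gam s (u (rho ^ n * t0))).
  { induction n as [| n IH]; simpl; [rewrite Rmult_1_l; exact H0 | rewrite Rmult_assoc; auto]. }
  assert (Hat : 0 < Rabs t0) by (apply Rabs_pos_lt; exact Ht).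
  destruct (pow_lt_1_zero rho ltac:(rewrite Rabs_right; lra) (d / Rabs t0)) as [N HN].
  { apply Rdiv_lt_0_compat; lra. }
  specialize (HN N (le_n _)).
  apply (Hdisc _ (Hn N)). rewrite Rabs_mult. split.
  - apply Rmult_lt_0_compat; [apply Rabs_pos_lt, pow_nonzero; lra | exact Hat].
  - assert (d / Rabs t0 * Rabs t0 = d) by (field; lra). pose proof (Rabs_pos (rho ^ N)). nra.
Qed.

(* Conjugating [u(r)] by an upper triangular [Y] rescales [r] by [a^2] or [d^2 = a^-2];
   discreteness of the translations forbids [|a| <> 1]. *)
Lemma in_conj_upper_triangular Gam s t0 Y : subgroup_G Gam -> mdet s = 1 -> t0 <> 0 ->
  translations_discrete Gam s -> in_conj Gam s (u t0) ->
  in_conj Gam s Y -> mc Y = 0 -> ma Y = 1 \/ ma Y = -1.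
Proof.
  intros HG Hs Ht HL H0 HY Hc.
  pose proof (in_conj_mdet Gam HG s Hs Y HY) as HdY.
  destruct Y as [a b c d]; simpl in Hc |- *; subst c. unfold mdet in HdY; simpl in HdY.
  assert (Ha : a <> 0) by (intro E; subst; lra).
  assert (Hup : forall r, in_conj Gam s (u r) -> in_conj Gam s (u (a ^ 2 * r))).
  { intros r Hr. replace (u (a ^ 2 * r)) with (mmul (mmul (M2 a b 0 d) (u r)) (minv (M2 a b 0 d))).
    - apply in_conj_conj_mmul; assumption.
    - clear - HdY. unfold u, mmul, minv; simpl; f_equal; nsatz. }
  assert (Hdown : forall r, in_conj Gam s (u r) -> in_conj Gam s (u (d ^ 2 * r))).
  { intros r Hr. replace (u (d ^ 2 * r))
      with (mmul (mmul (minv (M2 a b 0 d)) (u r)) (minv (minv (M2 a b 0 d)))).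
    - apply in_conj_conj_mmul; auto using in_conj_minv.
    - clear - HdY. unfold u, mmul, minv; simpl; f_equal; nsatz. }
  assert (Had : Rabs a * Rabs d = 1) by (rewrite <- Rabs_mult; replace (a * d) with 1 by lra; apply Rabs_R1).
  pose proof (Rabs_pos_lt a Ha). pose proof (Rabs_pos d).
  destruct (Rtotal_order (Rabs a) 1) as [Hlt | [Heq | Hgt]].
  - exfalso. apply (translations_not_contracted Gam s t0 (a ^ 2)); auto.
    rewrite <- Rsqr_pow2, Rsqr_abs. unfold Rsqr. nra.
  - unfold Rabs in Heq. destruct (Rcase_abs a); lra.
  - exfalso. apply (translations_not_contracted Gam s t0 (d ^ 2)); auto.
    rewrite <- Rsqr_pow2, Rsqr_abs. unfold Rsqr. nra.
Qed.

Definition vdet (w w' : R * R) : R := fst w * snd w' - fst w' * snd w.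

Definition eq_up_to_sign (w' w : R * R) : Prop := w' = w \/ w' = (- fst w, - snd w).

Lemma vdet_mapply A v v' : vdet (mapply A v) (mapply A v') = mdet A * vdet v v'.
Proof. unfold vdet, mapply, mdet; simpl; ring. Qed.

Lemma mapply_e1 A : mapply A (1, 0) = (ma A, mc A).
Proof. unfold mapply; simpl; f_equal; ring. Qed.

(* Two vectors of [m_j(pi_j^-1(Gamma p))] come from [h, h'] in [Gamma]; their determinant is
   the lower left entry of [s^-1 h h'^-1 s], to which Shimizu's lemma applies. *)
Theorem mj_vec_separated Gam s p t0 w w' :
  subgroup_G Gam -> discrete_G Gam -> mdet s = 1 -> in_G p -> t0 <> 0 ->
  translations_discrete Gam s -> in_conj Gam s (u t0) ->
  mj_vec Gam s p w -> mj_vec Gam s p w' ->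
  1 <= Rabs (vdet w w' * t0) \/ eq_up_to_sign w' w.
Proof.
  intros HG HD Hs Hp Ht HL H0 [h [Hh ->]] [h' [Hh' ->]].
  pose proof HG as (Hdet & _ & _ & Hmul & Hinv).
  pose proof (Hdet h Hh) as Hdh. unfold in_G in Hp, Hdh.
  set (Y := mmul (minv s) (mmul (mmul h (minv h')) s)).
  assert (HY : in_conj Gam s Y).
  { unfold in_conj. replace (mconj s Y) with (mmul h (minv h')); auto.
    unfold Y, mconj. clear - Hs. mat2_eq; nsatz. }
  set (A := mmul (minv (mmul h p)) s).
  assert (HAY : mmul A Y = mmul (minv (mmul h' p)) s).
  { unfold A, Y. rewrite !minv_mmul, !mmul_assoc.
    rewrite <- (mmul_assoc (mmul (minv p) (minv h)) s (minv s)), mmul_minv_r, mmul_1_r by exact Hs.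
    rewrite <- (mmul_assoc (minv p) (minv h) h), mmul_minv_l, mmul_1_r by exact Hdh.
    reflexivity. }
  assert (Ew : mapply (minv (mmul h p)) (ma s, mc s) = mapply A (1, 0)).
  { unfold A. rewrite mapply_mmul, mapply_e1. reflexivity. }
  assert (Ew' : mapply (minv (mmul h' p)) (ma s, mc s) = mapply A (ma Y, mc Y)).
  { transitivity (mapply (mmul (minv (mmul h' p)) s) (1, 0)).
    - rewrite mapply_mmul, mapply_e1. reflexivity.
    - rewrite <- HAY, mapply_mmul, mapply_e1. reflexivity. }
  assert (HdA : mdet A = 1) by (unfold A; rewrite mdet_mmul, mdet_minv, mdet_mmul, Hdh, Hp, Hs; ring).
  rewrite Ew, Ew', vdet_mapply, HdA.
  replace (vdet (1, 0) (ma Y, mc Y)) with (mc Y) by (unfold vdet; simpl; ring).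
  destruct (Req_dec (mc Y) 0) as [Hc | Hc].
  - right. destruct (in_conj_upper_triangular Gam s t0 Y HG Hs Ht HL H0 HY Hc) as [E | E];
      rewrite E, Hc; unfold eq_up_to_sign, mapply; simpl; [left | right]; f_equal; ring.
  - left. rewrite Rmult_1_l. exact (shimizu Gam s t0 Y HG HD Hs H0 Ht HY Hc).
Qed.

Lemma eq_up_to_sign_refl w : eq_up_to_sign w w.
Proof. left. reflexivity. Qed.

Lemma eq_up_to_sign_sym w w' : eq_up_to_sign w w' -> eq_up_to_sign w' w.
Proof.
  destruct w, w'; intros [E | E]; injection E as -> ->; [left | right]; simpl; f_equal; ring.
Qed.

Lemma eq_up_to_sign_trans w1 w2 w3 : eq_up_to_sign w1 w2 -> eq_up_to_sign w2 w3 -> eq_up_to_sign w1 w3.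
Proof.
  destruct w1, w2, w3; intros [E | E] [E' | E']; injection E as -> ->; injection E' as -> ->;
    simpl; [left | right | right | left]; f_equal; ring.
Qed.

(** * Real powers *)

Lemma Rpower_pos x y : 0 < Rpower x y.
Proof. apply exp_pos. Qed.

Lemma Rpower_le_1 x e : 1 <= x -> e <= 0 -> Rpower x e <= 1.
Proof. intros. rewrite <- (Rpower_O x) by lra. apply Rle_Rpower; lra. Qed.

Lemma Rpower_1_plus x g : 0 < x -> Rpower x (1 + g) = x * Rpower x g.
Proof. intro. rewrite Rpower_plus, Rpower_1 by exact H. reflexivity. Qed.

Lemma Rpower_le_double x y c : 0 < y -> y <= 2 * x -> 0 <= c <= 1 ->
  Rpower y c <= 2 * Rpower x c.
Proof.
  intros Hy Hyx Hc.
  assert (H2 : Rpower 2 c <= 2).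
  { rewrite <- (Rpower_1 2) at 2 by lra. apply Rle_Rpower; lra. }
  apply Rle_trans with (Rpower (2 * x) c); [apply Rle_Rpower_l; lra |].
  rewrite <- Rpower_mult_distr by lra. pose proof (Rpower_pos x c). nra.
Qed.

Lemma Rpower_1_plus_diff x y g : 0 < x <= y -> 0 <= g <= 1 ->
  Rpower x g * (y - x) <= Rpower y (1 + g) - Rpower x (1 + g) <= 2 * Rpower y g * (y - x).
Proof.
  intros Hxy Hg. rewrite !Rpower_1_plus by lra.
  assert (Hmono : Rpower x g <= Rpower y g) by (apply Rle_Rpower_l; lra).
  (* [x y^g <= x^g y], i.e. [(y/x)^g <= y/x] *)
  assert (Hswap : x * Rpower y g <= Rpower x g * y).
  { assert (Hx : x = Rpower x (1 - g) * Rpower x g)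
      by (rewrite <- Rpower_plus; replace (1 - g + g) with 1 by ring; rewrite Rpower_1; lra).
    assert (Hy : y = Rpower y (1 - g) * Rpower y g)
      by (rewrite <- Rpower_plus; replace (1 - g + g) with 1 by ring; rewrite Rpower_1; lra).
    assert (Rpower x (1 - g) <= Rpower y (1 - g)) by (apply Rle_Rpower_l; lra).
    rewrite Hx at 1. rewrite Hy at 2.
    assert (0 <= Rpower x g * Rpower y g)
      by (apply Rmult_le_pos; apply Rlt_le, Rpower_pos).
    replace (Rpower x (1 - g) * Rpower x g * Rpower y g)
      with (Rpower x g * Rpower y g * Rpower x (1 - g)) by ring.
    replace (Rpower x g * (Rpower y (1 - g) * Rpower y g))
      with (Rpower x g * Rpower y g * Rpower y (1 - g)) by ring.
    apply Rmult_le_compat_l; assumption. }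
  pose proof (Rpower_pos x g). split; nra.
Qed.

Lemma Rpower_1_plus_diff_comparable x y g : 0 < x -> 0 < y -> x <= 2 * y -> y <= 2 * x ->
  0 <= g <= 1 ->
  Rpower x g / 2 * Rabs (x - y) <= Rabs (Rpower x (1 + g) - Rpower y (1 + g))
  <= 4 * Rpower x g * Rabs (x - y).
Proof.
  intros Hx Hy Hxy Hyx Hg.
  pose proof (Rpower_pos x g). pose proof (Rpower_pos y g).
  destruct (Rle_dec x y) as [Hle | Hlt].
  - destruct (Rpower_1_plus_diff x y g (conj Hx Hle) Hg).
    pose proof (Rpower_le_double x y g Hy Hyx Hg).
    rewrite (Rabs_left1 (x - y)), (Rabs_left1 (Rpower x (1 + g) - _)) by nra. split; nra.
  - destruct (Rpower_1_plus_diff y x g (conj Hy (Rlt_le _ _ (Rnot_le_lt _ _ Hlt))) Hg).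
    pose proof (Rpower_le_double y x g Hx Hxy Hg).
    rewrite (Rabs_right (x - y)), (Rabs_right (Rpower x (1 + g) - _)) by nra. split; nra.
Qed.

(** * Short vectors along the curve [x |-> p Mx x] *)

Section Witnesses.
Variables (kap gam eps mu nu : R) (vecs : R * R -> Prop).
Let al := 1 / (kap + 4).
Hypothesis Hkap : 0 < kap.
Hypothesis Hgam : 0 < gam < al.
Hypothesis Heps : 0 < eps <= 1.
Hypothesis Hmu : eps < mu.
Hypothesis Hnu : 0 < nu.
Hypothesis Hdio : forall w, vecs w ->
  mu <= Rabs (snd w) \/ nu <= rpow (Rabs (fst w)) kap * Rabs (snd w).

(* [w = (a, b)] is a short vector for [p Mx x]: the coordinates of [Mx x^-1 w] are
   [x^(-1/4) (a - x^(1+gam) b)] and [x^(1/4) b]. *)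
Definition witness (w : R * R) (x : R) : Prop :=
  vecs w /\ 1 <= x /\ Rabs (snd w) <= eps * Rpower x (al - 1/2) /\
  Rabs (fst w - Rpower x (1 + gam) * snd w) <= eps * Rpower x al.

Definition dio_const : R := Rpower 2 kap / nu + 1.

Definition radius (w : R * R) (x : R) : R := Rpower x (al - gam) / Rabs (snd w).

Lemma alpha_bounds : 0 < al /\ al <= 1/4 /\ al * (kap + 1) <= 1.
Proof.
  unfold al. split; [| split].
  - apply Rdiv_lt_0_compat; lra.
  - apply Rmult_le_reg_r with (4 * (kap + 4)); [lra |]. field_simplify; lra.
  - unfold Rdiv. rewrite Rmult_1_l. apply Rmult_le_reg_r with (kap + 4); [lra |].
    field_simplify; lra.
Qed.

Lemma dio_const_bounds : 1 <= dio_const /\ Rpower 2 kap / dio_const < nu.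
Proof.
  pose proof (Rpower_pos 2 kap). unfold dio_const.
  assert (0 <= Rpower 2 kap / nu) by (apply Rmult_le_pos; [lra | apply Rlt_le, Rinv_0_lt_compat; lra]).
  split; [lra |].
  apply Rmult_lt_reg_r with (Rpower 2 kap / nu + 1); [lra |].
  unfold Rdiv at 1. rewrite Rmult_assoc, Rinv_l, Rmult_1_r by lra.
  assert (nu * (Rpower 2 kap / nu + 1) = Rpower 2 kap + nu) by (field; lra). lra.
Qed.

Lemma witness_fst_le w x : witness w x -> Rabs (snd w) <= Rpower x (al - gam - 1) ->
  Rabs (fst w) <= 2 * Rpower x al.
Proof.
  intros (_ & Hx & _ & He) Hb.
  set (p := Rpower x (1 + gam)) in *.
  assert (Hp0 : 0 < p) by apply Rpower_pos.
  assert (Hpx : p * Rpower x (al - gam - 1) = Rpower x al)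
    by (unfold p; rewrite <- Rpower_plus; f_equal; ring).
  replace (fst w) with ((fst w - p * snd w) + p * snd w) by ring.
  eapply Rle_trans; [apply Rabs_triang |].
  rewrite Rabs_mult, (Rabs_right p) by lra.
  assert (p * Rabs (snd w) <= Rpower x al) by (rewrite <- Hpx; apply Rmult_le_compat_l; lra).
  assert (eps * Rpower x al <= 1 * Rpower x al)
    by (apply Rmult_le_compat_r; [apply Rlt_le, Rpower_pos | lra]).
  lra.
Qed.

Lemma witness_snd_lower_bound w x : witness w x ->
  Rpower x (al - gam - 1) / dio_const <= Rabs (snd w).
Proof.
  intro Hw. pose proof (witness_fst_le w x Hw) as Hfst. destruct Hw as (HW & Hx & Hb & _).
  destruct alpha_bounds as (Hal0 & Hal1 & Hal2). destruct dio_const_bounds as (HC1 & HC2).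
  set (lb := Rpower x (al - gam - 1) / dio_const).
  destruct (Rle_lt_dec lb (Rabs (snd w))) as [| Hsmall]; [assumption | exfalso].
  assert (Hlb : lb <= Rpower x (al - gam - 1)).
  { unfold lb. apply Rmult_le_reg_r with dio_const; [lra |].
    unfold Rdiv. rewrite Rmult_assoc, Rinv_l, Rmult_1_r by lra.
    pose proof (Rpower_pos x (al - gam - 1)). nra. }
  assert (Hbmu : Rabs (snd w) < mu).
  { assert (eps * Rpower x (al - 1/2) <= eps * 1)
      by (apply Rmult_le_compat_l; [lra | apply Rpower_le_1; lra]).
    lra. }
  destruct (Hdio w HW) as [| Hnu']; [lra |].
  unfold rpow in Hnu'. destruct (Req_EM_T (Rabs (fst w)) 0) as [| Ha0]; [lra |].
  assert (Hak : Rpower (Rabs (fst w)) kap <= Rpower 2 kap * Rpower x (al * kap)).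
  { rewrite <- Rpower_mult, Rpower_mult_distr by (try lra; apply Rpower_pos).
    apply Rle_Rpower_l; [lra |]. pose proof (Rabs_pos (fst w)). split; [lra | apply Hfst; lra]. }
  assert (Hexp : Rpower x (al * kap) * Rpower x (al - gam - 1) <= 1).
  { rewrite <- Rpower_plus. apply Rpower_le_1; [lra | nra]. }
  pose proof (Rpower_pos 2 kap). pose proof (Rpower_pos x (al * kap)).
  assert (nu < Rpower 2 kap * Rpower x (al * kap) * lb).
  { eapply Rle_lt_trans; [exact Hnu' |].
    apply Rle_lt_trans with (Rpower 2 kap * Rpower x (al * kap) * Rabs (snd w)).
    - apply Rmult_le_compat_r; [apply Rabs_pos | exact Hak].
    - apply Rmult_lt_compat_l; [nra | exact Hsmall]. }
  assert (Rpower 2 kap * Rpower x (al * kap) * lb <= Rpower 2 kap / dio_const).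
  { unfold lb, Rdiv. assert (0 < / dio_const) by (apply Rinv_0_lt_compat; lra).
    replace (Rpower 2 kap * Rpower x (al * kap) * (Rpower x (al - gam - 1) * / dio_const))
      with ((Rpower 2 kap * / dio_const) * (Rpower x (al * kap) * Rpower x (al - gam - 1))) by ring.
    rewrite <- (Rmult_1_r (Rpower 2 kap * / dio_const)) at 2.
    apply Rmult_le_compat_l; nra. }
  lra.
Qed.

Definition shrink : R := / (4 * dio_const).

Lemma shrink_bounds : 0 < shrink /\ shrink * dio_const = 1/4.
Proof.
  destruct dio_const_bounds as [HC1 _]. unfold shrink.
  split; [apply Rinv_0_lt_compat; lra | field; lra].
Qed.

Lemma witness_snd_pos w x : witness w x -> 0 < Rabs (snd w).
Proof.
  intro Hw. pose proof (witness_snd_lower_bound w x Hw). destruct dio_const_bounds as [HC1 _].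
  assert (0 < Rpower x (al - gam - 1) / dio_const) by (apply Rdiv_lt_0_compat; [apply Rpower_pos | lra]).
  lra.
Qed.

Lemma radius_mul_abs_snd w x : witness w x -> radius w x * Rabs (snd w) = Rpower x (al - gam).
Proof. intro Hw. pose proof (witness_snd_pos w x Hw). unfold radius. field. lra. Qed.

Lemma radius_bounds w x : witness w x -> 0 < shrink * radius w x <= x / 4.
Proof.
  intro Hw. pose proof (witness_snd_lower_bound w x Hw) as Hlow.
  pose proof (witness_snd_pos w x Hw) as Hb. pose proof (radius_mul_abs_snd w x Hw) as HRb.
  destruct Hw as (_ & Hx & _). destruct shrink_bounds as [Hs HsC]. destruct dio_const_bounds as [HC1 _].
  assert (Hexp : Rpower x (al - gam) = Rpower x (al - gam - 1) * x).
  { replace (al - gam) with ((al - gam - 1) + 1) at 1 by ring. rewrite Rpower_plus, Rpower_1; lra. }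
  assert (HR : radius w x <= dio_const * x).
  { apply Rmult_le_reg_r with (Rabs (snd w)); [exact Hb |]. rewrite HRb, Hexp.
    apply Rmult_le_reg_r with (/ dio_const); [apply Rinv_0_lt_compat; lra |].
    replace (dio_const * x * Rabs (snd w) * / dio_const) with (x * Rabs (snd w)) by (field; lra).
    unfold Rdiv in Hlow. nra. }
  assert (0 < radius w x) by (unfold radius; apply Rdiv_lt_0_compat; [apply Rpower_pos | exact Hb]).
  split; [nra |]. apply Rle_trans with (shrink * (dio_const * x)); [nra |].
  rewrite <- Rmult_assoc, HsC. lra.
Qed.

Lemma witness_cross w x w' x' : witness w x -> witness w' x' -> x <= 2 * x' ->
  Rpower x al * Rabs (snd w') <= 2 * eps.
Proof.
  intros (_ & Hx & _) (_ & Hx' & Hb' & _) Hxx.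
  destruct alpha_bounds as (Hal0 & Hal1 & _).
  assert (H2 : Rpower x al <= 2 * Rpower x' al) by (apply Rpower_le_double; lra).
  assert (H1 : Rpower x' al * Rpower x' (al - 1/2) <= 1)
    by (rewrite <- Rpower_plus; apply Rpower_le_1; lra).
  pose proof (Rpower_pos x al). pose proof (Rpower_pos x' al). pose proof (Rpower_pos x' (al - 1/2)).
  apply Rle_trans with (2 * Rpower x' al * (eps * Rpower x' (al - 1/2)));
    [apply Rmult_le_compat; [lra | apply Rabs_pos | lra | lra] | nra].
Qed.

Lemma witness_eq_up_to_sign w w' x : vecs w -> eq_up_to_sign w' w -> witness w' x -> witness w x.
Proof.
  intros Hvw [-> | ->] (_ & Hx & Hb & He); [repeat split; assumption |].
  simpl in Hb, He. rewrite Rabs_Ropp in Hb.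
  replace (- fst w - Rpower x (1 + gam) * - snd w) with (- (fst w - Rpower x (1 + gam) * snd w))
    in He by ring.
  rewrite Rabs_Ropp in He. repeat split; assumption.
Qed.

Lemma witness_shift_le w x x' : witness w x -> witness w x' ->
  Rabs (Rpower x (1 + gam) - Rpower x' (1 + gam)) * Rabs (snd w)
  <= eps * (Rpower x al + Rpower x' al).
Proof.
  intros (_ & _ & _ & He) (_ & _ & _ & He'). rewrite <- Rabs_mult.
  replace ((Rpower x (1 + gam) - Rpower x' (1 + gam)) * snd w)
    with ((fst w - Rpower x' (1 + gam) * snd w) - (fst w - Rpower x (1 + gam) * snd w)) by ring.
  eapply Rle_trans; [apply Rabs_triang |]. rewrite Rabs_Ropp. lra.
Qed.

(* If [w] witnessed two far apart times [x < x'/2], then [|x^(1+gam) - x'^(1+gam)| |b|]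
   would be of order [x'^al / dio_const], while it is at most [2 eps x'^al]. *)
Lemma witness_same_vector_comparable w x x' : witness w x -> witness w x' ->
  eps * (4 * dio_const) < 1 -> x' <= 2 * x.
Proof.
  intros Hw Hw' Hsmall. apply Rnot_lt_le. intro Hfar.
  pose proof (witness_shift_le w x x' Hw Hw') as Hshift.
  pose proof (witness_snd_lower_bound w x' Hw') as Hlow.
  destruct Hw as (_ & Hx & _). destruct Hw' as (_ & Hx' & _).
  destruct alpha_bounds as (Hal0 & Hal1 & _). destruct dio_const_bounds as (HC1 & _).
  set (p := Rpower x (1 + gam)) in *. set (p' := Rpower x' (1 + gam)) in *.
  assert (Hp'x : p' * Rpower x' (al - gam - 1) = Rpower x' al)
    by (unfold p'; rewrite <- Rpower_plus; f_equal; ring).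
  assert (Hpp : p <= p' / 2).
  { unfold p, p'. rewrite !Rpower_1_plus by lra.
    assert (Rpower x gam <= Rpower x' gam) by (apply Rle_Rpower_l; lra).
    pose proof (Rpower_pos x gam). nra. }
  assert (Hp0 : 0 < p) by apply Rpower_pos.
  assert (Hdiff : p' / 2 <= Rabs (p - p')) by (rewrite Rabs_left1; lra).
  assert (Rpower x al <= Rpower x' al) by (apply Rle_Rpower_l; lra).
  assert (Hq0 : 0 < Rpower x' (al - gam - 1) / dio_const)
    by (apply Rdiv_lt_0_compat; [apply Rpower_pos | lra]).
  assert (p' / 2 * (Rpower x' (al - gam - 1) / dio_const) <= eps * (2 * Rpower x' al)).
  { apply Rle_trans with (Rabs (p - p') * Rabs (snd w)).
    - assert (0 < p') by apply Rpower_pos. apply Rmult_le_compat; lra.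
    - nra. }
  assert (p' / 2 * (Rpower x' (al - gam - 1) / dio_const) = Rpower x' al / (2 * dio_const))
    by (rewrite <- Hp'x; field; lra).
  assert (HvA : 0 < Rpower x' al) by apply Rpower_pos.
  assert (Rpower x' al <= eps * (4 * dio_const) * Rpower x' al).
  { apply Rmult_le_reg_r with (/ (2 * dio_const)); [apply Rinv_0_lt_compat; lra |].
    replace (eps * (4 * dio_const) * Rpower x' al * / (2 * dio_const))
      with (eps * (2 * Rpower x' al)) by (field; lra).
    unfold Rdiv in *. lra. }
  nra.
Qed.

Lemma witness_same_vector_close w x x' : witness w x -> witness w x' ->
  eps * (4 * dio_const) < 1 -> Rabs (x - x') <= 6 * eps * radius w x.
Proof.
  intros Hw Hw' Hsmall.
  pose proof (witness_same_vector_comparable w x x' Hw Hw' Hsmall).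
  pose proof (witness_same_vector_comparable w x' x Hw' Hw Hsmall).
  pose proof (witness_shift_le w x x' Hw Hw') as Hshift.
  pose proof (witness_snd_pos w x Hw) as Hb. pose proof (radius_mul_abs_snd w x Hw) as HRb.
  destruct Hw as (_ & Hx & _). destruct Hw' as (_ & Hx' & _).
  destruct alpha_bounds as (Hal0 & Hal1 & _).
  destruct (Rpower_1_plus_diff_comparable x x' gam ltac:(lra) ltac:(lra) ltac:(lra) ltac:(lra)
              ltac:(lra)) as [Hlow _].
  assert (Rpower x' al <= 2 * Rpower x al) by (apply Rpower_le_double; lra).
  assert (eps * Rpower x' al <= eps * (2 * Rpower x al)) by (apply Rmult_le_compat_l; lra).
  assert (Hga : Rpower x gam * Rpower x (al - gam) = Rpower x al)
    by (rewrite <- Rpower_plus; f_equal; ring).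
  pose proof (Rpower_pos x gam) as Hxg.
  assert (H3 : Rpower x gam / 2 * Rabs (x - x') * Rabs (snd w) <= 3 * eps * Rpower x al).
  { apply Rle_trans with (Rabs (Rpower x (1 + gam) - Rpower x' (1 + gam)) * Rabs (snd w));
      [apply Rmult_le_compat_r; lra | lra]. }
  apply Rmult_le_reg_r with (Rpower x gam / 2 * Rabs (snd w)); [apply Rmult_lt_0_compat; lra |].
  replace (6 * eps * radius w x * (Rpower x gam / 2 * Rabs (snd w)))
    with (3 * eps * (Rpower x gam * (radius w x * Rabs (snd w)))) by field.
  rewrite HRb, Hga. lra.
Qed.

Lemma witness_shift_term_le w x w' x' : witness w x -> witness w' x' ->
  x <= 2 * x' -> x' <= 2 * x ->
  Rabs (x - x') <= shrink * radius w x + shrink * radius w' x' ->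
  Rabs ((Rpower x (1 + gam) - Rpower x' (1 + gam)) * snd w * snd w') <= 4 * eps.
Proof.
  intros Hw Hw' Hxx' Hx'x Hnear.
  pose proof (radius_bounds w x Hw) as [HR _]. pose proof (radius_bounds w' x' Hw') as [HR' _].
  pose proof (radius_mul_abs_snd w x Hw) as HRb. pose proof (radius_mul_abs_snd w' x' Hw') as HRb'.
  pose proof (witness_cross w x w' x' Hw Hw' Hxx') as Hc.
  pose proof (witness_cross w' x' w x Hw' Hw Hx'x) as Hc'.
  destruct shrink_bounds as [Hs HsC]. destruct dio_const_bounds as (HC1 & _).
  destruct Hw as (_ & Hx & _). destruct Hw' as (_ & Hx' & _).
  destruct alpha_bounds as (Hal0 & Hal1 & _).
  destruct (Rpower_1_plus_diff_comparable x x' gam ltac:(lra) ltac:(lra) ltac:(lra) ltac:(lra)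
              ltac:(lra)) as [_ Hup].
  destruct (Rpower_1_plus_diff_comparable x' x gam ltac:(lra) ltac:(lra) ltac:(lra) ltac:(lra)
              ltac:(lra)) as [_ Hup'].
  rewrite Rabs_minus_sym, (Rabs_minus_sym x') in Hup'.
  set (d := Rabs (Rpower x (1 + gam) - Rpower x' (1 + gam))) in *.
  set (r := shrink * radius w x) in *. set (r' := shrink * radius w' x') in *.
  pose proof (Rpower_pos x gam). pose proof (Rpower_pos x' gam).
  (* the smaller of [x^gam], [x'^gam] may be used for both halves of [|x - x'|] *)
  assert (Hd : d <= 4 * Rpower x gam * r + 4 * Rpower x' gam * r').
  { pose proof (Rabs_pos (x - x')).
    destruct (Rle_dec (Rpower x gam) (Rpower x' gam)); nra. }
  assert (Hga : Rpower x gam * (radius w x * Rabs (snd w)) = Rpower x al)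
    by (rewrite HRb, <- Rpower_plus; f_equal; ring).
  assert (Hga' : Rpower x' gam * (radius w' x' * Rabs (snd w')) = Rpower x' al)
    by (rewrite HRb', <- Rpower_plus; f_equal; ring).
  assert (Hr : r = shrink * radius w x) by reflexivity.
  assert (Hr' : r' = shrink * radius w' x') by reflexivity.
  pose proof (Rabs_pos (snd w)). pose proof (Rabs_pos (snd w')).
  rewrite !Rabs_mult. fold d.
  apply Rle_trans with ((4 * Rpower x gam * r + 4 * Rpower x' gam * r') * Rabs (snd w) * Rabs (snd w')).
  { apply Rmult_le_compat_r; [assumption |]. apply Rmult_le_compat_r; assumption. }
  replace ((4 * Rpower x gam * r + 4 * Rpower x' gam * r') * Rabs (snd w) * Rabs (snd w'))
    with (4 * shrink * (Rpower x al * Rabs (snd w') + Rpower x' al * Rabs (snd w)))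
    by (rewrite <- Hga, <- Hga', Hr, Hr'; ring).
  apply Rle_trans with (4 * shrink * (4 * eps)); [apply Rmult_le_compat_l; lra |].
  assert (shrink <= 1/4) by nra. nra.
Qed.

(* [a b' - a' b = (p - p') b b' + (a - p b) b' - (a' - p' b') b] with [p = x^(1+gam)]. *)
Lemma witness_vdet_le w x w' x' z : witness w x -> witness w' x' ->
  Rabs (z - x) <= shrink * radius w x -> Rabs (z - x') <= shrink * radius w' x' ->
  Rabs (vdet w w') <= 8 * eps.
Proof.
  intros Hw Hw' Hz Hz'.
  pose proof (radius_bounds w x Hw) as [_ HR]. pose proof (radius_bounds w' x' Hw') as [_ HR'].
  assert (Hnear : Rabs (x - x') <= shrink * radius w x + shrink * radius w' x').
  { replace (x - x') with ((z - x') - (z - x)) by ring.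
    eapply Rle_trans; [apply Rabs_triang |]. rewrite Rabs_Ropp. lra. }
  assert (Hcmp : x <= 2 * x' /\ x' <= 2 * x).
  { pose proof (Rle_abs (x - x')). pose proof (Rle_abs (- (x - x'))).
    rewrite Rabs_Ropp in H0. destruct Hw as (_ & Hx & _). destruct Hw' as (_ & Hx' & _). lra. }
  destruct Hcmp as [Hxx' Hx'x].
  pose proof (witness_shift_term_le w x w' x' Hw Hw' Hxx' Hx'x Hnear) as T1.
  pose proof (witness_cross w x w' x' Hw Hw' Hxx') as Hc.
  pose proof (witness_cross w' x' w x Hw' Hw Hx'x) as Hc'.
  destruct Hw as (_ & _ & _ & He). destruct Hw' as (_ & _ & _ & He').
  set (p := Rpower x (1 + gam)) in *. set (p' := Rpower x' (1 + gam)) in *.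
  assert (T2 : Rabs ((fst w - p * snd w) * snd w') <= 2 * eps).
  { rewrite Rabs_mult. pose proof (Rabs_pos (snd w')).
    apply Rle_trans with (eps * Rpower x al * Rabs (snd w')); [apply Rmult_le_compat_r; lra |].
    rewrite Rmult_assoc. apply Rle_trans with (eps * (2 * eps)); [apply Rmult_le_compat_l; lra | nra]. }
  assert (T3 : Rabs ((fst w' - p' * snd w') * snd w) <= 2 * eps).
  { rewrite Rabs_mult. pose proof (Rabs_pos (snd w)).
    apply Rle_trans with (eps * Rpower x' al * Rabs (snd w)); [apply Rmult_le_compat_r; lra |].
    rewrite Rmult_assoc. apply Rle_trans with (eps * (2 * eps)); [apply Rmult_le_compat_l; lra | nra]. }
  replace (vdet w w') with ((p - p') * snd w * snd w' + (fst w - p * snd w) * snd w'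
                            - (fst w' - p' * snd w') * snd w) by (unfold vdet; ring).
  unfold Rminus at 1. eapply Rle_trans; [apply Rabs_triang |]. rewrite Rabs_Ropp.
  eapply Rle_trans; [apply Rplus_le_compat_r, Rabs_triang |]. lra.
Qed.

End Witnesses.

(** * Covering by separated intervals *)

Lemma partial_choice (A : Type) (P : nat -> A -> Prop) : exists f : nat -> option A,
  (forall n a, f n = Some a -> P n a) /\ (forall n, (exists a, P n a) -> exists a, f n = Some a).
Proof.
  exists (fun n => match excluded_middle_informative (exists a, P n a) with
           | left H => Some (proj1_sig (constructive_indefinite_description _ H))
           | right _ => None end).
  split; intro n; destruct excluded_middle_informative as [H | H].
  - intros a E. injection E as <-. exact (proj2_sig (constructive_indefinite_description _ H)).
  - discriminate.
  - eauto.
  - contradiction.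
Qed.

Lemma exists_least (P : nat -> Prop) : (exists n, P n) ->
  exists n, P n /\ forall m, (m < n)%nat -> ~ P m.
Proof.
  intros [n Hn]. apply NNPP. intro Hno.
  assert (Hbelow : forall k m, (m <= k)%nat -> ~ P m).
  { induction k as [| k IH]; intros m Hm Pm.
    - apply Hno. exists m. split; [exact Pm | intros; lia].
    - destruct (le_lt_eq_dec _ _ Hm) as [Hlt | ->]; [apply (IH m); [lia | exact Pm] |].
      apply Hno. exists (S k). split; [exact Pm |]. intros m' Hm'. apply (IH m'). lia. }
  exact (Hbelow n n (le_n _) Hn).
Qed.

Definition qseq (n : nat) : R :=
  INR (fst (Cantor.of_nat n)) / INR (S (snd (Cantor.of_nat n))).

Lemma qseq_dense l r : 0 <= l -> l < r -> exists n, l <= qseq n <= r.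
Proof.
  intros Hl Hr.
  destruct (archimed_cor1 (r - l) ltac:(lra)) as [m [Hm Hm0]].
  assert (Hm' : 0 < INR m) by (apply lt_0_INR; exact Hm0).
  set (z := up (l * INR m)). destruct (archimed (l * INR m)) as [Hz1 Hz2]. fold z in Hz1, Hz2.
  assert (Hz : (0 <= z)%Z) by (apply le_IZR; assert (0 <= l * INR m) by nra; lra).
  exists (Cantor.to_nat (Z.to_nat z, Nat.pred m)). unfold qseq. rewrite Cantor.cancel_of_to.
  cbn [fst snd]. replace (S (Nat.pred m)) with m by lia.
  rewrite INR_IZR_INZ, Z2Nat.id by exact Hz.
  assert (Hmr : 1 <= (r - l) * INR m).
  { apply Rmult_le_reg_l with (/ INR m); [apply Rinv_0_lt_compat; lra |].
    replace (/ INR m * ((r - l) * INR m)) with (r - l) by (field; lra). lra. }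
  split; apply Rmult_le_reg_r with (INR m); try exact Hm';
    replace (IZR z / INR m * INR m) with (IZR z) by (field; lra); nra.
Qed.

(* The intervals lying left of the last one and those lying right of it are bounded
   separately by induction. *)
Lemma sum_disjoint_intervals_le N : forall (l r : nat -> R) A B, A <= B ->
  (forall i, (i <= N)%nat -> l i <= r i) ->
  (forall i, (i <= N)%nat -> l i < r i -> A <= l i /\ r i <= B) ->
  (forall i j, (i <= N)%nat -> (j <= N)%nat -> i <> j -> l i < r i -> l j < r j ->
     r i < l j \/ r j < l i) ->
  sum_f_R0 (fun i => r i - l i) N <= B - A.
Proof.
  induction N as [| N IH]; intros l r A B HAB Hlr Hin Hdj.
  - simpl. destruct (Rle_lt_or_eq_dec _ _ (Hlr 0%nat (le_n _))) as [H | H]; [| lra].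
    destruct (Hin 0%nat (le_n _) H). lra.
  - simpl. destruct (Rle_lt_or_eq_dec _ _ (Hlr (S N) (le_n _))) as [Hne | He].
    2: { enough (sum_f_R0 (fun i => r i - l i) N <= B - A) by lra. apply IH; auto. }
    set (L := l (S N)). set (Rr := r (S N)).
    destruct (Hin (S N) (le_n _) Hne) as [HA HB]. fold L Rr in HA, HB, Hne.
    set (on_left i := if Rle_dec (r i) L then true else false).
    set (lL i := if on_left i then l i else A). set (rL i := if on_left i then r i else A).
    set (lR i := if on_left i then B else l i). set (rR i := if on_left i then B else r i).
    assert (Hsplit : sum_f_R0 (fun i => r i - l i) N =
      sum_f_R0 (fun i => rL i - lL i) N + sum_f_R0 (fun i => rR i - lR i) N).
    { rewrite <- sum_plus. apply sum_eq. intros i _. unfold lL, rL, lR, rR. destruct (on_left i); ring. }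
    assert (SL : sum_f_R0 (fun i => rL i - lL i) N <= L - A).
    { apply IH; [lra | ..]; unfold lL, rL, on_left.
      - intros i Hi. destruct Rle_dec; [apply Hlr; lia | lra].
      - intros i Hi H. destruct Rle_dec; [| lra]. destruct (Hin i ltac:(lia) H). lra.
      - intros i j Hi Hj Hij. do 2 destruct Rle_dec; try lra. apply Hdj; lia. }
    assert (SR : sum_f_R0 (fun i => rR i - lR i) N <= B - Rr).
    { apply IH; [lra | ..]; unfold lR, rR, on_left.
      - intros i Hi. destruct Rle_dec; [lra | apply Hlr; lia].
      - intros i Hi H. destruct Rle_dec as [| Hn]; [lra |].
        destruct (Hin i ltac:(lia) H). split; [| assumption].
        destruct (Hdj i (S N) ltac:(lia) (le_n _) ltac:(lia) H Hne) as [E | E];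
          fold L Rr in E; lra.
      - intros i j Hi Hj Hij. do 2 destruct Rle_dec; try lra. apply Hdj; lia. }
    lra.
Qed.

Section SeparatedBalls.
Variables (W : Type) (ball : W -> R -> Prop) (rad : W -> R -> R) (equiv : W -> W -> Prop).
Variables (K L : R).
Hypothesis equiv_refl : forall w, equiv w w.
Hypothesis equiv_sym : forall w w', equiv w w' -> equiv w' w.
Hypothesis equiv_trans : forall w1 w2 w3, equiv w1 w2 -> equiv w2 w3 -> equiv w1 w3.
Hypothesis HK : 0 <= K.
Hypothesis HL : 0 <= L.
Hypothesis rad_bounds : forall w x, ball w x -> 0 < rad w x /\ 0 <= x - rad w x /\ x + rad w x <= L.
Hypothesis balls_separated : forall w x w' x' z, ball w x -> ball w' x' ->
  Rabs (z - x) <= rad w x -> Rabs (z - x') <= rad w' x' -> equiv w' w.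
Hypothesis equiv_balls_close : forall w x w' x', ball w x -> ball w' x' -> equiv w' w ->
  Rabs (x - x') <= K * rad w x.

Definition first_hit (n : nat) (wx : W * R) : Prop :=
  ball (fst wx) (snd wx) /\ Rabs (qseq n - snd wx) <= rad (fst wx) (snd wx) /\
  forall m, (m < n)%nat -> forall w' x', ball w' x' -> equiv w' (fst wx) ->
    ~ Rabs (qseq m - x') <= rad w' x'.

Lemma Rabs_le_between z x r : x - r <= z <= x + r -> Rabs (z - x) <= r.
Proof. intros. unfold Rabs; destruct Rcase_abs; lra. Qed.

Lemma first_hit_disjoint n n' w x w' x' : n <> n' ->
  first_hit n (w, x) -> first_hit n' (w', x') ->
  x + rad w x < x' - rad w' x' \/ x' + rad w' x' < x - rad w x.
Proof.
  intros Hnn' (Hb & Hq & Hfirst) (Hb' & Hq' & Hfirst'). simpl in *.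
  destruct (Rlt_dec (x + rad w x) (x' - rad w' x')) as [| H1]; [left; assumption |].
  destruct (Rlt_dec (x' + rad w' x') (x - rad w x)) as [| H2]; [right; assumption |].
  exfalso. apply Rnot_lt_le in H1, H2.
  destruct (rad_bounds w x Hb). destruct (rad_bounds w' x' Hb').
  set (z := Rmax (x - rad w x) (x' - rad w' x')).
  assert (Hz : Rabs (z - x) <= rad w x) by (apply Rabs_le_between; unfold z, Rmax; destruct Rle_dec; lra).
  assert (Hz' : Rabs (z - x') <= rad w' x') by (apply Rabs_le_between; unfold z, Rmax; destruct Rle_dec; lra).
  pose proof (balls_separated w x w' x' z Hb Hb' Hz Hz') as Hww'.
  destruct (Nat.lt_total n n') as [Hlt | [Heq | Hlt]]; [| contradiction |].
  - exact (Hfirst' n Hlt w x Hb (equiv_sym _ _ Hww') Hq).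
  - exact (Hfirst n' Hlt w' x' Hb' Hww' Hq').
Qed.

(* Take [n] least such that [qseq n] lies in a ball equivalent to [w]. *)
Lemma first_hit_cover w x : ball w x -> exists n, (exists wx, first_hit n wx) /\
  forall wx, first_hit n wx -> equiv w (fst wx).
Proof.
  intros Hb.
  set (hits n := exists w' x', ball w' x' /\ equiv w' w /\ Rabs (qseq n - x') <= rad w' x').
  destruct (exists_least hits) as [n [[w1 [x1 (Hb1 & Hw1 & Hq1)]] Hmin]].
  { destruct (rad_bounds w x Hb) as (Hr & Hl & _).
    destruct (qseq_dense (x - rad w x) (x + rad w x) Hl ltac:(lra)) as [n Hn].
    exists n, w, x. split; [exact Hb | split; [apply equiv_refl | apply Rabs_le_between; lra]]. }
  exists n. split.
  - exists (w1, x1). split; [exact Hb1 | split; [exact Hq1 |]].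
    intros m Hm w' x' Hb' Hw' Hq'. apply (Hmin m Hm). exists w', x'.
    split; [exact Hb' | split; [eapply equiv_trans; eauto | exact Hq']].
  - intros [w2 x2] (Hb2 & Hq2 & _). simpl in *.
    apply equiv_sym, (equiv_trans _ w1); [| exact Hw1].
    exact (balls_separated w1 x1 w2 x2 (qseq n) Hb1 Hb2 Hq1 Hq2).
Qed.

Theorem leb_outer_le_of_separated_balls (E : R -> Prop) :
  (forall x, E x -> exists w, ball w x) -> leb_outer_le E (K * L).
Proof.
  intros Hcover eta Heta.
  destruct (partial_choice (W * R) first_hit) as [sel [Hsel_spec Hsel_some]].
  set (l n := match sel n with Some (w, x) => x - rad w x | None => 0 end).
  set (r n := match sel n with Some (w, x) => x + rad w x | None => 0 end).
  assert (Hlr : forall n, l n <= r n).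
  { intro n. unfold l, r. destruct (sel n) as [[w x] |] eqn:Es; [| lra].
    destruct (Hsel_spec n _ Es) as (Hb & _). destruct (rad_bounds w x Hb). lra. }
  exists (fun n => (l n + r n) / 2 - K * (r n - l n) / 2),
         (fun n => (l n + r n) / 2 + K * (r n - l n) / 2).
  split; [| split].
  - intro n. pose proof (Hlr n). nra.
  - intros x Hx. destruct (Hcover x Hx) as [w Hb].
    destruct (first_hit_cover w x Hb) as [n [Hex Hall]].
    destruct (Hsel_some n Hex) as [[w2 x2] Es]. exists n.
    pose proof (Hsel_spec n _ Es) as Hhit. pose proof (Hall _ Hhit) as Hww2. destruct Hhit as (Hb2 & _).
    pose proof (equiv_balls_close w2 x2 w x Hb2 Hb Hww2) as Hclose.
    unfold l, r. rewrite Es.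
    replace ((x2 - rad w2 x2 + (x2 + rad w2 x2)) / 2) with x2 by field.
    replace (K * (x2 + rad w2 x2 - (x2 - rad w2 x2)) / 2) with (K * rad w2 x2) by field.
    pose proof (Rle_abs (x2 - x)). pose proof (Rle_abs (- (x2 - x))). rewrite Rabs_Ropp in *. lra.
  - intro N.
    replace (sum_f_R0 _ N) with (K * sum_f_R0 (fun n => r n - l n) N)
      by (rewrite scal_sum; apply sum_eq; intros; field).
    enough (sum_f_R0 (fun n => r n - l n) N <= L - 0) by nra.
    apply sum_disjoint_intervals_le; [| intros; apply Hlr | |].
    + lra.
    + intros i _. unfold l, r. destruct (sel i) as [[w x] |] eqn:Es; [| lra].
      destruct (Hsel_spec i _ Es) as (Hb & _). destruct (rad_bounds w x Hb). lra.
    + intros i j _ _ Hij. unfold l, r.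
      destruct (sel i) as [[w x] |] eqn:Ei; [| lra]. destruct (sel j) as [[w' x'] |] eqn:Ej; [| lra].
      intros _ _. exact (first_hit_disjoint i j w x w' x' Hij (Hsel_spec i _ Ei) (Hsel_spec j _ Ej)).
Qed.

End SeparatedBalls.

Section WitnessSet.
Variables (kap gam eps mu nu t0 : R) (vecs : R * R -> Prop).
Hypothesis Hkap : 0 < kap.
Hypothesis Hgam : 0 < gam < 1 / (kap + 4).
Hypothesis Heps : 0 < eps <= 1.
Hypothesis Hmu : eps < mu.
Hypothesis Hnu : 0 < nu.
Hypothesis Hdio : forall w, vecs w ->
  mu <= Rabs (snd w) \/ nu <= rpow (Rabs (fst w)) kap * Rabs (snd w).
Hypothesis Hsep : forall w w', vecs w -> vecs w' ->
  1 <= Rabs (vdet w w' * t0) \/ eq_up_to_sign w' w.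
Hypothesis Heps_t0 : 8 * eps * Rabs t0 < 1.
Hypothesis Heps_C : eps * (4 * dio_const kap nu) < 1.

Theorem witness_set_measure (E : R -> Prop) T : 1 <= T ->
  (forall x, E x -> x <= T /\ exists w, witness kap gam eps vecs w x) ->
  leb_outer_le E (T * (48 * dio_const kap nu * eps)).
Proof.
  intros HT HE.
  destruct (dio_const_bounds kap nu Hnu) as [HC1 _].
  destruct (shrink_bounds kap nu Hnu) as [Hs HsC].
  set (ball w x := witness kap gam eps vecs w x /\ x <= T).
  set (rad w x := shrink kap nu * radius kap gam w x).
  replace (T * (48 * dio_const kap nu * eps)) with ((24 * eps * dio_const kap nu) * (2 * T)) by ring.
  apply (leb_outer_le_of_separated_balls (R * R) ball rad eq_up_to_sign); unfold ball, rad.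
  - exact eq_up_to_sign_refl.
  - exact eq_up_to_sign_sym.
  - exact eq_up_to_sign_trans.
  - nra.
  - lra.
  - intros w x [Hw HxT]. pose proof (radius_bounds kap gam eps mu nu vecs Hkap Hgam Heps Hmu Hnu Hdio w x Hw).
    destruct Hw as (_ & Hx & _). lra.
  - intros w x w' x' z [Hw _] [Hw' _] Hz Hz'.
    pose proof (witness_vdet_le kap gam eps mu nu vecs Hkap Hgam Heps Hmu Hnu Hdio w x w' x' z Hw Hw' Hz Hz').
    destruct Hw as (Hvw & _). destruct Hw' as (Hvw' & _).
    destruct (Hsep w w' Hvw Hvw') as [Hfar | ]; [exfalso | assumption].
    rewrite Rabs_mult in Hfar. pose proof (Rabs_pos t0). nra.
  - intros w x w' x' [Hw _] [Hw' _] Hww'.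
    assert (Hwx' : witness kap gam eps vecs w x')
      by (apply (witness_eq_up_to_sign kap gam eps vecs w w' x'); [apply Hw | exact Hww' | exact Hw']).
    pose proof (witness_same_vector_close kap gam eps mu nu vecs Hkap Hgam Heps Hmu Hnu Hdio w x x' Hw Hwx' Heps_C).
    replace (24 * eps * dio_const kap nu * (shrink kap nu * radius kap gam w x))
      with (6 * eps * radius kap gam w x * (4 * (shrink kap nu * dio_const kap nu))) by ring.
    rewrite HsC. lra.
  - intros x Hx. destruct (HE x Hx) as [HxT [w Hw]]. exists w. split; assumption.
Qed.

End WitnessSet.

Lemma vnorm_ge v : Rabs (fst v) <= vnorm v /\ Rabs (snd v) <= vnorm v.
Proof. unfold vnorm. rewrite <- !sqrt_Rsqr_abs. split; apply sqrt_le_1_alt; unfold Rsqr; simpl; nra. Qed.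

Lemma mj_vec_mmul Gam s g X v : mj_vec Gam s (mmul g X) v ->
  exists w, mj_vec Gam s g w /\ v = mapply (minv X) w.
Proof.
  intros [h [Hh ->]]. exists (mapply (minv (mmul h g)) (ma s, mc s)).
  split; [exists h; split; [exact Hh | reflexivity] |].
  rewrite <- mapply_mmul, <- minv_mmul, mmul_assoc. reflexivity.
Qed.

Lemma Rabs_mult_pos_le c y d : 0 < c -> Rabs y <= d -> Rabs (c * y) <= c * d.
Proof. intros Hc Hy. rewrite Rabs_mult, (Rabs_right c) by lra. apply Rmult_le_compat_l; lra. Qed.

Theorem in_S_witness Gam s p kap gam eps x : 1 <= x ->
  in_S Gam s (mmul p (Mx x gam)) (eps * Rpower x (- (1/4) + 1 / (kap + 4))) ->
  exists w, witness kap gam eps (mj_vec Gam s p) w x.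
Proof.
  intros Hx [v [Hv Hn]]. destruct (mj_vec_mmul Gam s p (Mx x gam) v Hv) as [w [Hw ->]].
  exists w. split; [exact Hw | split; [exact Hx |]].
  set (delta := eps * Rpower x (- (1/4) + 1 / (kap + 4))) in Hn.
  destruct (vnorm_ge (mapply (minv (Mx x gam)) w)) as [N1 N2].
  apply (fun H => Rle_trans _ _ _ H Hn) in N1, N2. clear Hn.
  unfold mapply, minv, Mx in N1, N2; cbn [fst snd ma mb mc md] in N1, N2.
  destruct w as [a b]; cbn [fst snd] in *.
  assert (Hx0 : 0 < x) by lra.
  assert (E1 : Rpower x (1/4) * Rpower x (- (1/4)) = 1)
    by (rewrite <- Rpower_plus; replace (1/4 + - (1/4)) with 0 by ring; apply Rpower_O, Hx0).
  pose proof (Rpower_pos x (1/4)). pose proof (Rpower_pos x (- (1/4))).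
  split.
  - replace (- 0 * a + Rpower x (1/4) * b) with (Rpower x (1/4) * b) in N2 by ring.
    replace b with (Rpower x (- (1/4)) * (Rpower x (1/4) * b))
      by (rewrite <- Rmult_assoc, (Rmult_comm (Rpower x (- (1/4)))), E1; ring).
    replace (eps * Rpower x (1 / (kap + 4) - 1/2)) with (Rpower x (- (1/4)) * delta).
    2: { unfold delta. replace (1 / (kap + 4) - 1/2) with (- (1/4) + (- (1/4) + 1 / (kap + 4)))
           by lra. rewrite (Rpower_plus (- (1/4)) (- (1/4) + 1 / (kap + 4)) x). ring. }
    apply Rabs_mult_pos_le; lra.
  - replace (a - Rpower x (1 + gam) * b)
      with (Rpower x (1/4) * (Rpower x (- (1/4)) * a + - Rpower x (3/4 + gam) * b)).
    2: { assert (E4 : Rpower x (1/4) * Rpower x (3/4 + gam) = Rpower x (1 + gam))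
           by (rewrite <- Rpower_plus; f_equal; lra).
         transitivity ((Rpower x (1/4) * Rpower x (- (1/4))) * a
                       - (Rpower x (1/4) * Rpower x (3/4 + gam)) * b); [ring |].
         rewrite E1, E4. ring. }
    replace (eps * Rpower x (1 / (kap + 4))) with (Rpower x (1/4) * delta).
    2: { unfold delta. replace (1 / (kap + 4)) with (1/4 + (- (1/4) + 1 / (kap + 4))) at 2
           by lra. rewrite (Rpower_plus (1/4) (- (1/4) + 1 / (kap + 4)) x). ring. }
    apply Rabs_mult_pos_le; lra.
Qed.

Lemma lattice_in_N_ge1 L : lattice_in_N L -> exists t0, 1 <= t0 /\ L t0.
Proof.
  intros [_ [M HM]]. destruct (HM (M + 1)) as [t0 [Ht0 Hdist]]. exists t0. split; [| exact Ht0].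
  pose proof (Rle_abs (M + 1 - t0)). pose proof (Rabs_pos (M + 1 - t0)). lra.
Qed.

Lemma cusp_vectors_separated Gam k eta sigma p j :
  nonuniform_lattice Gam -> cusp_data Gam k eta sigma -> in_G p -> (j < k)%nat ->
  exists t0, 1 <= t0 /\ forall w w', mj_vec Gam (sigma j) p w -> mj_vec Gam (sigma j) p w' ->
    1 <= Rabs (vdet w w' * t0) \/ eq_up_to_sign w' w.
Proof.
  intros (HG & HD & _) (_ & Hcusp) Hp Hj.
  destruct (Hcusp j Hj) as (Hs & _ & Hlat).
  destruct (lattice_in_N_ge1 _ Hlat) as [t0 [Ht0 Hu0]].
  exists t0. split; [exact Ht0 |]. intros w w' Hw Hw'.
  exact (mj_vec_separated Gam (sigma j) p t0 w w' HG HD Hs Hp ltac:(lra) (proj1 Hlat) Hu0 Hw Hw').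
Qed.

Lemma diophantine_at Gam k sigma kappa p j : diophantine Gam k sigma kappa p -> (j < k)%nat ->
  0 < kappa j /\ exists mu nu, 0 < mu /\ 0 < nu /\ forall w, mj_vec Gam (sigma j) p w ->
    mu <= Rabs (snd w) \/ nu <= rpow (Rabs (fst w)) (kappa j) * Rabs (snd w).
Proof.
  intros [Hkappa Hdio] Hj. split; [exact (Hkappa j Hj) |].
  destruct (Hdio j Hj) as [mu [nu (Hmu & Hnu & Hmn)]].
  exists mu, nu. split; [exact Hmu | split; [exact Hnu |]]. intros [a b] Hw. exact (Hmn a b Hw).
Qed.

Lemma Rmult_lt_1_of_lt_inv e a : 0 < a -> e < / a -> e * a < 1.
Proof.
  intros Ha He. apply Rmult_lt_reg_r with (/ a); [apply Rinv_0_lt_compat, Ha |].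
  rewrite Rmult_assoc, Rinv_r, Rmult_1_r, Rmult_1_l by lra. exact He.
Qed.

Theorem lemma4p2 (Gam : mat2 -> Prop) (k : nat) (eta : nat -> option R)
  (sigma : nat -> mat2) (kappa : nat -> R) (p : mat2) (j : nat) (gam : R) :
  nonuniform_lattice Gam ->
  cusp_data Gam k eta sigma ->
  in_G p ->
  diophantine Gam k sigma kappa p ->
  (j < k)%nat ->
  0 < gam -> gam < 1 / (kappa j + 4) ->
  exists C, 0 < C /\ exists eps0, 0 < eps0 /\
    forall eps T, 0 < eps -> eps < eps0 -> 1 <= T ->
      leb_outer_le
        (fun x => 1 <= x <= T /\
           in_S Gam (sigma j) (mmul p (Mx x gam))
                (eps * Rpower x (- (1/4) + 1 / (kappa j + 4))))
        (T * (C * eps)).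
Proof.
  intros HGam Hcusp Hp Hdio Hj Hg0 Hg1.
  destruct (cusp_vectors_separated Gam k eta sigma p j HGam Hcusp Hp Hj) as [t0 [Ht0 Hsep]].
  destruct (diophantine_at Gam k sigma kappa p j Hdio Hj) as [Hkap [mu [nu (Hmu & Hnu & Hvecs)]]].
  set (C := dio_const (kappa j) nu).
  destruct (dio_const_bounds (kappa j) nu Hnu) as [HC _]. fold C in HC.
  exists (48 * C). split; [lra |].
  exists (Rmin (Rmin 1 mu) (Rmin (/ (4 * C)) (/ (8 * t0)))).
  split; [repeat apply Rmin_pos; try apply Rinv_0_lt_compat; lra |].
  intros eps T Heps Heps0 HT.
  apply Rmin_Rgt in Heps0 as [[Heps1 Hepsmu]%Rmin_Rgt [HepsC Hepst0]%Rmin_Rgt].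
  apply (witness_set_measure (kappa j) gam eps mu nu t0 (mj_vec Gam (sigma j) p));
    fold C; auto; try lra.
  - rewrite Rabs_right by lra. replace (8 * eps * t0) with (eps * (8 * t0)) by ring.
    apply Rmult_lt_1_of_lt_inv; [lra | exact Hepst0].
  - apply Rmult_lt_1_of_lt_inv; [lra | exact HepsC].
  - intros x [Hx HS]. split; [lra |].
    exact (in_S_witness Gam (sigma j) p (kappa j) gam eps x (proj1 Hx) HS).
Qed.
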